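(* Let $V$ be a finite-dimensional real vector space with $\dim V\neq 2$, and let $F\in\Lambda^2V^*$. Then there is a scalar product (nondegenerate symmetric bilinear form) on $V$ of index $0$ or $1$ such that $F$ is isotropic, i.e. $g(F,F)=0$ for the induced scalar product on $\Lambda^2V^*$. Furthermore, if $V=U\oplus W$ with $\dim U=\dim W$ and $F\in U^*\wedge W^*$, then the scalar product can be chosen so that, in addition, $U$ and $W$ are isotropic subspaces.
   Context: The index of a scalar product of signature $(p,q)$ is $p-q$. For $V=U\oplus W$, $U^*$ (resp. $W^*$) denotes the forms vanishing on $W$ (resp. $U$), and $U^*\wedge W^*$ is the image of $U^*\otimes W^*$ in $\Lambda^2V^*$. A subspace is isotropic if the scalar product restricts to zero on it. *)

(* V = R^n as row vectors 'rV[R]_n, R : realType (the reals). *)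
From HB Require Import structures.
From mathcomp Require Import all_boot all_order all_algebra.
From mathcomp Require Import reals.
Set Implicit Arguments. Unset Strict Implicit. Unset Printing Implicit Defensive.
Import Order.TTheory GRing.Theory Num.Theory.
Local Open Scope ring_scope.

Section Defs.
Variables (R : realType) (n : nat).

(* A bilinear form on V = 'rV_n is a matrix G : g(u,v) = (u *m G *m v^T) 0 0.
   A scalar product: symmetric and nondegenerate. *)
Definition scalar_product (G : 'M[R]_n) : Prop :=
  G^T = G /\ G \in unitmx.

Definition pos_def_on (G S : 'M[R]_n) : Prop :=
  forall v : 'rV[R]_n, (v <= S)%MS -> v != 0 -> 0 < (v *m G *m v^T) 0 0.
Definition neg_def_on (G S : 'M[R]_n) : Prop :=
  forall v : 'rV[R]_n, (v <= S)%MS -> v != 0 -> (v *m G *m v^T) 0 0 < 0.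

Definition is_pos_index (G : 'M[R]_n) (p : nat) : Prop :=
  (exists S, \rank S = p /\ pos_def_on G S) /\
  (forall S, pos_def_on G S -> (\rank S <= p)%N).
Definition is_neg_index (G : 'M[R]_n) (q : nat) : Prop :=
  (exists S, \rank S = q /\ neg_def_on G S) /\
  (forall S, neg_def_on G S -> (\rank S <= q)%N).

Definition has_index (G : 'M[R]_n) (k : int) : Prop :=
  exists p q : nat, is_pos_index G p /\ is_neg_index G q /\ p%:Z - q%:Z = k.

(* 2-forms on V: skew-symmetric matrices F, F(u,v) = (u *m F *m v^T) 0 0. *)
Definition two_form (F : 'M[R]_n) : Prop := F^T = - F.

(* induced scalar product on Lambda^2 V^* (inverse metric g^{ij} = invmx G):
   g(A,B) = sum_{i,j,k,l} g^{ik} g^{jl} A_{ij} B_{kl}  (normalisation irrelevant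
   for isotropy). *)
Definition l2dot (G A B : 'M[R]_n) : R :=
  \sum_(i < n) \sum_(j < n) \sum_(k < n) \sum_(l < n)
     invmx G i k * invmx G j l * A i j * B k l.

(* Linear forms on V are column vectors a : 'cV_n, a(v) = (v *m a) 0 0.
   a /\ b as a 2-form: a b^T - b a^T. *)
Definition wedge (a b : 'cV[R]_n) : 'M[R]_n := a *m b^T - b *m a^T.

(* F lies in U^* /\ W^*, the image of U^* (x) W^* in Lambda^2 V^*, where
   U^* = forms vanishing on W and W^* = forms vanishing on U. *)
Definition in_wedge (U W F : 'M[R]_n) : Prop :=
  exists (m : nat) (a b : 'I_m -> 'cV[R]_n),
    (forall k, W *m a k = 0) /\ (forall k, U *m b k = 0) /\
    F = \sum_(k < m) wedge (a k) (b k).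

Definition isotropic (G U : 'M[R]_n) : Prop := U *m G *m U^T = 0.

End Defs.

(* Choose a basis u_1..u_m, w_1..w_(m+d) of V (n = 2m + d) such that W = span(w) is
   F-isotropic; such a W of dimension m + d exists because F is alternating: an isotropic
   subspace of dimension < n/2 has an F-orthogonal of larger dimension, and any vector of it
   outside W extends W.  Let g pair u_i with w_i (i <= m), make the last d vectors w
   orthonormal and U isotropic: g has index d.  As F vanishes on W, the induced product is
   g(F, F) = -2 tr(N^2) with N_ij = F(u_i, w_j), i, j <= m.  Changing bases of U and W
   independently replaces N by A N B; starting from the rank normal form of N, a cyclic
   shift of the w's (or a rotation when N is an invertible 2 x 2 block) makes tr(N^2) = 0,
   which is impossible only when n = 2. *)

From HB Require Import structures.
From mathcomp Require Import all_boot all_order all_algebra.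
From mathcomp Require Import reals perm.
From mathcomp Require Import ring lra zify.
Import Order.TTheory GRing.Theory Num.Theory.
Set Implicit Arguments. Unset Strict Implicit. Unset Printing Implicit Defensive.
Local Open Scope ring_scope.

Section Signature.
Variable R : realType.

Lemma mulmx_trmx_gt0 k (v : 'rV[R]_k) : v != 0 -> 0 < (v *m v^T) 0 0.
Proof.
move=> v_neq0; rewrite mxE.
have [j vj_neq0] : exists j, v 0 j != 0.
  apply/existsP; apply: contraR v_neq0 => /existsPn v0; apply/eqP/matrixP => i j.
  by rewrite (ord1 i) mxE; apply/eqP; move: (v0 j); rewrite negbK.
under eq_bigr do rewrite mxE -expr2.
rewrite (bigD1 j) //= ltr_pwDl //; first by rewrite lt0r sqr_ge0 sqrf_eq0 andbT.
by apply: sumr_ge0 => i _; rewrite sqr_ge0.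
Qed.

Lemma neg_def_onN k (G S : 'M[R]_k) : neg_def_on G S <-> pos_def_on (- G) S.
Proof.
by split=> GS v vS v_neq0; have := GS v vS v_neq0;
  rewrite mulmxN mulNmx [X in 0 < X]mxE oppr_gt0.
Qed.

Lemma is_neg_indexN k (G : 'M[R]_k) q : is_neg_index G q <-> is_pos_index (- G) q.
Proof.
split=> [[[S [rS GS]] leq_q] | [[S [rS GS]] leq_q]]; split.
- by exists S; split=> //; apply/neg_def_onN.
- by move=> S' /neg_def_onN; apply: leq_q.
- by exists S; split=> //; apply/neg_def_onN.
- by move=> S' S'G; apply/leq_q/neg_def_onN.
Qed.

Lemma pos_neg_def_rank_le k (G S T : 'M[R]_k) :
  pos_def_on G S -> neg_def_on G T -> (\rank S + \rank T <= k)%N.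
Proof.
move=> GS GT; rewrite -mxrank_disjoint_sum ?rank_leq_col //.
apply/eqP; rewrite -submx0; apply/rV_subP => v; rewrite sub_capmx => /andP[vS vT].
rewrite submx0; apply/negP => /negP v_neq0.
by have := lt_trans (GT v vT v_neq0) (GS v vS v_neq0); rewrite ltxx.
Qed.

Lemma has_index_split k (G S T : 'M[R]_k) :
  pos_def_on G S -> neg_def_on G T -> (\rank S + \rank T = k)%N ->
  has_index G ((\rank S)%:Z - (\rank T)%:Z).
Proof.
move=> GS GT rST; exists (\rank S), (\rank T); split; last split=> //.
- split; first by exists S.
  by move=> S' /pos_neg_def_rank_le/(_ GT); rewrite -[X in (_ <= X)%N]rST leq_add2r.
- split; first by exists T.
  by move=> T' /(pos_neg_def_rank_le GS); rewrite -[X in (_ <= X)%N]rST leq_add2l.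
Qed.

Lemma pos_def_on_genmx k p (G : 'M[R]_k) (M : 'M[R]_(p, k)) :
  M *m G = M -> pos_def_on G <<M>>%MS.
Proof.
move=> MG v; rewrite genmxE => /submxP[x ->] v_neq0.
by rewrite -(mulmxA x M G) MG; apply: mulmx_trmx_gt0.
Qed.

End Signature.

Lemma l2dot_trace (R : realType) k (G A C : 'M[R]_k) :
  l2dot G A C = \tr (A^T *m invmx G *m C *m (invmx G)^T).
Proof.
set K := invmx G; rewrite /l2dot /mxtrace.
transitivity (\sum_(i < k) \sum_(j < k)
    A i j * \sum_(p < k) \sum_(q < k) K i p * C p q * K j q).
  apply: eq_bigr => i _; apply: eq_bigr => j _; rewrite mulr_sumr.
  apply: eq_bigr => p _; rewrite mulr_sumr; apply: eq_bigr => q _; ring.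
rewrite -!mulmxA exchange_big; apply: eq_bigr => j _; rewrite mxE.
apply: eq_bigr => i _; rewrite [A^T j i]mxE; congr (_ * _).
rewrite [RHS]mxE; apply: eq_bigr => p _; rewrite mxE mulr_sumr.
by apply: eq_bigr => q _; rewrite [K^T q j]mxE mulrA.
Qed.

Lemma quad_congr (R : realType) p k l (V : 'M[R]_(p, l)) (B : 'M[R]_(l, k)) (H : 'M[R]_k) :
  V *m (B *m H *m B^T) *m V^T = V *m B *m H *m (V *m B)^T.
Proof. by rewrite trmx_mul !mulmxA. Qed.

Section Congruence.
Variables (R : realType) (k n : nat) (P : 'M[R]_(k, n)) (B : 'M[R]_(n, k)).
Hypotheses (PB : P *m B = 1%:M) (BP : B *m P = 1%:M).

Lemma is_pos_index_congr (H : 'M[R]_k) p :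
  is_pos_index H p -> is_pos_index (B *m H *m B^T) p.
Proof.
have P_free : row_free P by apply/row_freeP; exists B.
have B_free : row_free B by apply/row_freeP; exists P.
move=> [[S [rS HS]] leq_p]; split.
  exists <<S *m P>>%MS; split; first by rewrite mxrank_gen mxrankMfree.
  move=> v; rewrite genmxE => /submxP[x ->] v_neq0.
  have xSPB : x *m (S *m P) *m B = x *m S by rewrite -!mulmxA PB mulmx1.
  rewrite quad_congr xSPB.
  apply: HS; first exact: submxMl.
  by apply: contraNneq v_neq0 => x0; rewrite mulmxA x0 mul0mx.
move=> T HT; rewrite -(mxrankMfree T B_free) -mxrank_gen; apply: leq_p.
move=> v; rewrite genmxE => /submxP[x ->] v_neq0.
have := HT (x *m T) (submxMl _ _); rewrite quad_congr !mulmxA; apply.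
by apply: contraNneq v_neq0 => x0; rewrite mulmxA x0 mul0mx.
Qed.

Lemma has_index_congr (H : 'M[R]_k) s : has_index H s -> has_index (B *m H *m B^T) s.
Proof.
move=> [p [q [Hp [Hq pq]]]]; exists p, q; split; first exact: is_pos_index_congr.
split=> //; apply/is_neg_indexN; rewrite -mulNmx -mulmxN.
exact/is_pos_index_congr/is_neg_indexN.
Qed.

Lemma mulmx_congr_inv (H : 'M[R]_k) :
  H \in unitmx -> P^T *m invmx H *m P *m (B *m H *m B^T) = 1%:M.
Proof.
move=> H_unit; rewrite !mulmxA -(mulmxA _ P) PB mulmx1 -(mulmxA _ (invmx H)).
by rewrite mulVmx // mulmx1 -trmx_mul BP trmx1.
Qed.

Lemma unitmx_congr (H : 'M[R]_k) : H \in unitmx -> B *m H *m B^T \in unitmx.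
Proof. by move/mulmx_congr_inv/mulmx1_unit => []. Qed.

Lemma invmx_congr (H : 'M[R]_k) :
  H \in unitmx -> invmx (B *m H *m B^T) = P^T *m invmx H *m P.
Proof.
move=> H_unit; rewrite -[LHS]mul1mx -(mulmx_congr_inv H_unit) mulmxK //.
exact: unitmx_congr.
Qed.

Lemma scalar_product_congr (H : 'M[R]_k) :
  scalar_product H -> scalar_product (B *m H *m B^T).
Proof.
move=> [H_sym H_unit]; split; last exact: unitmx_congr.
by rewrite !trmx_mul trmxK H_sym mulmxA.
Qed.

Lemma l2dot_congr (H : 'M[R]_k) (F : 'M[R]_n) :
  H \in unitmx -> l2dot (B *m H *m B^T) F F = l2dot H (P *m F *m P^T) (P *m F *m P^T).
Proof.
move=> H_unit; rewrite !l2dot_trace invmx_congr // !trmx_mul !trmxK.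
by rewrite !mulmxA mxtrace_mulC !mulmxA.
Qed.

End Congruence.

Ltac block_simpl := rewrite ?(mul_col_mx, mul_row_block, mul_row_col, mul_mx_row,
  mul_col_row, mulmx0, mul0mx, mulmx1, mul1mx, addr0, add0r, mulNmx, mulmxN,
  row_mx0, col_mx0, add_row_mx, add_col_mx, opp_row_mx, opp_col_mx, oppr0, opprK).

Section HyperbolicForm.
Variables (R : realType) (m d : nat).

Definition hyp_mx : 'M[R]_(m + (m + d)) :=
  block_mx 0 (row_mx 1%:M 0) (col_mx 1%:M 0) (block_mx 0 0 0 1%:M).

Lemma tr_hyp_mx : hyp_mx^T = hyp_mx.
Proof. by rewrite /hyp_mx ?(tr_block_mx, tr_row_mx, tr_col_mx, trmx0, trmx1). Qed.

Lemma hyp_mxK : hyp_mx *m hyp_mx = 1%:M.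
Proof.
by rewrite /hyp_mx mulmx_block; block_simpl; rewrite -block_mxEv -!scalar_mx_block.
Qed.

Lemma hyp_mx_unit : hyp_mx \in unitmx.
Proof. by have [] := mulmx1_unit hyp_mxK. Qed.

Lemma invmx_hyp_mx : invmx hyp_mx = hyp_mx.
Proof. by rewrite -[LHS]mul1mx -hyp_mxK mulmxK ?hyp_mx_unit. Qed.

Lemma scalar_product_hyp_mx : scalar_product hyp_mx.
Proof. by split; [exact: tr_hyp_mx | exact: hyp_mx_unit]. Qed.

Lemma hyp_mx_index : has_index hyp_mx d.
Proof.
pose Mp : 'M[R]_(m + d, m + (m + d)) :=
  col_mx (row_mx 1%:M (row_mx 1%:M 0)) (row_mx 0 (row_mx 0 1%:M)).
pose Mn : 'M[R]_(m, m + (m + d)) := row_mx 1%:M (row_mx (- 1%:M) 0).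
have rank_Mp : \rank <<Mp>>%MS = (m + d)%N.
  rewrite mxrank_gen; apply/eqP/row_freeP.
  exists (col_mx (row_mx 1%:M 0) (col_mx 0 (row_mx 0 1%:M))).
  by rewrite /Mp; block_simpl; rewrite -block_mxEv -scalar_mx_block.
have rank_Mn : \rank <<Mn>>%MS = m.
  by rewrite mxrank_gen; apply/eqP/row_freeP; exists (col_mx 1%:M 0); block_simpl.
have Mp_pos : pos_def_on hyp_mx <<Mp>>%MS.
  by apply: pos_def_on_genmx; rewrite /Mp /hyp_mx; block_simpl.
have Mn_neg : neg_def_on hyp_mx <<Mn>>%MS.
  by apply/neg_def_onN/pos_def_on_genmx; rewrite /Mn /hyp_mx; block_simpl.
have := has_index_split Mp_pos Mn_neg; rewrite rank_Mp rank_Mn PoszD addrAC subrr.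
by apply; lia.
Qed.

Lemma hyp_mx_isotropic_l :
  row_mx 1%:M 0 *m hyp_mx *m (row_mx (1%:M : 'M[R]_m) 0)^T = 0.
Proof. by rewrite /hyp_mx tr_row_mx trmx1 trmx0; block_simpl. Qed.

Lemma hyp_mx_isotropic_r :
  row_mx 0 1%:M *m hyp_mx *m (row_mx 0 (1%:M : 'M[R]_(m + d)))^T = block_mx 0 0 0 1%:M.
Proof. by rewrite /hyp_mx tr_row_mx trmx1 trmx0; block_simpl. Qed.

Lemma l2dot_hyp_mx (F1 : 'M[R]_m) (N : 'M[R]_(m, m + d)) :
  let Fb := block_mx F1 N (- N^T) 0 in
  l2dot hyp_mx Fb Fb = - \tr (lsubmx N *m lsubmx N) *+ 2.
Proof.
pose X : 'M[R]_(m, m + d) := row_mx 1%:M 0.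
have NX : N *m X^T = lsubmx N.
  by rewrite tr_row_mx trmx1 trmx0 -{1}(hsubmxK N) mul_row_col mulmx1 mulmx0 addr0.
rewrite /= l2dot_trace invmx_hyp_mx tr_hyp_mx.
have -> : hyp_mx = block_mx 0 X X^T (block_mx 0 0 0 1%:M).
  by rewrite /hyp_mx /X tr_row_mx trmx1 trmx0.
rewrite tr_block_mx trmx0 linearN /= trmxK !mulmx_block.
rewrite !(mulmx0, mul0mx, addr0, add0r) mxtrace_block !(mulNmx, mulmxN) !linearN /=.
have -> : \tr (N^T *m X *m N^T *m X) = \tr (N *m X^T *m N *m X^T).
  by rewrite -mxtrace_tr !trmx_mul !trmxK !mulmxA mxtrace_mulC !mulmxA.
by rewrite -mulmxA NX; ring.
Qed.

End HyperbolicForm.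

Lemma modS_two_cycle (N a b : nat) : (a < N)%N ->
  (a.+1 %% N)%N = b -> (b.+1 %% N)%N = a ->
  (N = 1 /\ a = 0 /\ b = 0 \/ N = 2 /\ a + b = 1)%N.
Proof.
move=> aN; have modS c : (c < N)%N -> (c.+1 %% N = if c.+1 == N then 0 else c.+1)%N.
  by move=> cN; case: eqP => [->|?]; rewrite ?modnn ?modn_small //; lia.
rewrite modS // => ab; have bN : (b < N)%N by move: ab; case: eqP; lia.
by rewrite modS //; move: ab; do 2 case: eqP; lia.
Qed.

Section PidTraceSquare.
Variables (R : realType) (m d : nat).
Local Notation shift := (perm (@ordS_inj (m + d))).

Lemma pid_mx_shiftE r (i : 'I_m) (j : 'I_(m + d)) :
  (pid_mx r *m perm_mx shift) i j = ((i < r)%N && (j == (i.+1 %% (m + d))%N :> nat))%:R :> R.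
Proof.
rewrite mxE (bigD1 (widen_ord (leq_addr d m) i)) //= big1 ?addr0.
  rewrite !mxE eqxx /= permE.
  by case: (i < r)%N; rewrite ?mul0r ?mul1r // eq_sym -val_eqE.
move=> k /eqP k_neq_i; rewrite !mxE.
suff -> : (i == k :> nat) = false by rewrite mul0r.
by apply/eqP => ik; apply: k_neq_i; apply: val_inj.
Qed.

Definition rot2_mx : 'M[R]_2 := \matrix_(i, j) (if (i <= j)%N then 1 else -1).

Lemma rot2_mx_unit : rot2_mx \in unitmx.
Proof.
have rot2_inv : rot2_mx *m (2^-1 *: rot2_mx^T) = 1%:M.
  have two_neq0 : (2 : R) != 0 by rewrite pnatr_eq0.
  apply/matrixP => i j; rewrite !mxE !big_ord_recl big_ord0 !mxE.
  by case: i => [[|[|i]] ?]; case: j => [[|[|j]] ?] //=; field.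
by have [] := mulmx1_unit rot2_inv.
Qed.

Lemma exists_pid_trace_sqr0 r : (r <= m)%N -> (d != 0)%N || (m != 1)%N ->
  exists2 Z : 'M[R]_(m + d), Z \in unitmx &
    \tr (lsubmx (pid_mx r *m Z) *m lsubmx (pid_mx r *m Z)) = 0.
Proof.
move=> le_rm md_neq1.
(* When d = 0 and r = m = 2 the shift is an involution, hence the rotation. *)
have [/and3P[/eqP d0 /eqP rm /eqP m2] | not_rot] := boolP [&& d == 0, r == m & m == 2]%N.
  subst d r m; exists rot2_mx; first exact: rot2_mx_unit.
  by rewrite /mxtrace; do 4! rewrite ?(big_ord_recl, big_ord0, mxE) /=; ring.
exists (perm_mx shift); first exact: unitmx_perm.
rewrite /mxtrace big1 // => a _; rewrite mxE big1 // => b _.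
rewrite [lsubmx _ a b]mxE [lsubmx _ b a]mxE !pid_mx_shiftE /=.
case ab: (_ && _); case ba: (_ && _); rewrite ?mul0r ?mulr0 //.
case/andP: ab => ar /eqP ab; case/andP: ba => br /eqP ba.
have a_lt : (a < m + d)%N by rewrite ltn_addr.
by have := modS_two_cycle a_lt (esym ab) (esym ba); move: md_neq1 not_rot; lia.
Qed.

End PidTraceSquare.

Lemma exists_equiv_trace_sqr0 (R : realType) m d (C : 'M[R]_(m, m + d)) :
  (d != 0)%N || (m != 1)%N ->
  exists A : 'M[R]_m, exists B : 'M[R]_(m + d),
    [/\ A \in unitmx, B \in unitmx &
        \tr (lsubmx (A *m C *m B) *m lsubmx (A *m C *m B)) = 0].
Proof.
move=> md_neq1; have [Z Z_unit trZ] := exists_pid_trace_sqr0 R (rank_leq_row C) md_neq1.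
exists (invmx (col_ebase C)), (invmx (row_ebase C) *m Z).
rewrite unitmx_inv col_ebase_unit unitmx_mul unitmx_inv row_ebase_unit Z_unit.
split=> //; rewrite -[X in _ *m X *m _](mulmx_ebase C) !mulmxA.
rewrite mulVmx ?col_ebase_unit // mul1mx -(mulmxA _ (row_ebase C)).
by rewrite mulmxV ?row_ebase_unit // mulmx1.
Qed.

Section IsotropicSubspaces.
Variable R : realType.

Lemma quad_form_sub0 n k l (G : 'M[R]_n) (U : 'M[R]_(k, n)) (V : 'M[R]_(l, n)) :
  (V <= U)%MS -> U *m G *m U^T = 0 -> V *m G *m V^T = 0.
Proof. by case/submxP=> X -> UGU; rewrite -quad_congr UGU mulmx0 mul0mx. Qed.

Lemma skew_quad0 n (F : 'M[R]_n) (v : 'rV[R]_n) : F^T = - F -> v *m F *m v^T = 0.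
Proof.
move=> F_skew; have vFv_skew : (v *m F *m v^T)^T = - (v *m F *m v^T).
  by rewrite !trmx_mul trmxK F_skew mulNmx mulmxN mulmxA.
apply/matrixP => i j; rewrite !ord1 mxE.
by have := congr1 (fun M : 'M[R]_1 => M 0 0) vFv_skew; rewrite !mxE; lra.
Qed.

Lemma isotropic_extend n (F W : 'M[R]_n) : F^T = - F -> W *m F *m W^T = 0 ->
  (2 * \rank W < n)%N ->
  exists2 W' : 'M[R]_n, W' *m F *m W'^T = 0 & (\rank W < \rank W')%N.
Proof.
move=> F_skew WFW lt_Wn; set K := kermx (F *m W^T).
have rank_K : (n - \rank W <= \rank K)%N.
  rewrite mxrank_ker leq_sub2l // -[X in (_ <= X)%N](mxrank_tr W).
  exact: mxrankM_maxr.
have [i K_notin_W] : exists i, ~~ (row i K <= W)%MS.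
  by apply/row_subPn; apply/negP => /mxrankS; lia.
set v := row i K; have vFW : v *m F *m W^T = 0.
  by apply/eqP; rewrite -mulmxA -sub_kermx row_sub.
exists (W + v)%MS.
  apply: (quad_form_sub0 (U := col_mx W v)); first by rewrite addsmxE.
  rewrite tr_col_mx mul_col_mx mul_col_row WFW vFW skew_quad0 //.
  have -> : W *m F *m v^T = 0.
    by apply: trmx_inj; rewrite !trmx_mul trmxK F_skew mulNmx mulmxN mulmxA vFW oppr0 trmx0.
  exact: block_mx0.
have : (W < W + v)%MS.
  rewrite ltmxE addsmxSl /=; apply: contra K_notin_W.
  exact: submx_trans (addsmxSr W v).
by rewrite ltmxErank => /andP[].
Qed.

Lemma exists_isotropic_half n (F : 'M[R]_n) : F^T = - F ->
  exists2 W : 'M[R]_n, W *m F *m W^T = 0 & (n <= 2 * \rank W)%N.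
Proof.
move=> F_skew.
suff /(_ n)[W WFW rank_W] : forall j, exists2 W : 'M[R]_n, W *m F *m W^T = 0 &
    (n <= 2 * \rank W)%N || (j <= \rank W)%N.
  by exists W => //; case/orP: rank_W; lia.
elim=> [|j [W WFW rank_W]]; first by exists 0; rewrite ?mul0mx ?orbT.
have [le_nW | lt_Wn] := leqP n (2 * \rank W); first by exists W; rewrite ?le_nW.
have [W' W'FW' lt_WW'] := isotropic_extend F_skew WFW lt_Wn.
by exists W' => //; move: rank_W; rewrite leqNgt lt_Wn /=; lia.
Qed.

End IsotropicSubspaces.

Section Bases.
Variable R : realType.

Lemma exists_row_free_sub n (W : 'M[R]_n) k : (k <= \rank W)%N ->
  exists2 Wb : 'M[R]_(k, n), row_free Wb & (Wb <= W)%MS.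
Proof.
move=> le_kW; exists (pid_mx k *m row_base W).
  by rewrite /row_free mxrankMfree ?row_base_free // rank_pid_mx.
by rewrite (submx_trans (submxMl _ _)) // eq_row_base.
Qed.

Lemma exists_row_full_col_mx n k m (Wb : 'M[R]_(k, n)) :
  row_free Wb -> (m + k = n)%N -> exists Ub : 'M[R]_(m, n), row_full (col_mx Ub Wb).
Proof.
move=> /eqP Wb_free mkn; have rank_C : \rank (Wb^C)%MS = m by rewrite mxrank_compl; lia.
have [Ub /eqP Ub_free Ub_sub] := exists_row_free_sub (eq_leq (esym rank_C)).
have Ub_eq : (Ub == Wb^C)%MS by rewrite -(mxrank_leqif_eq Ub_sub) rank_C Ub_free.
exists Ub; rewrite /row_full -addsmxE (adds_eqmx (eqmxP Ub_eq) (eqmx_refl Wb)) addsmxC.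
exact: addsmx_compl_full.
Qed.

Lemma row_full_pinvmx k n (P : 'M[R]_(k, n)) :
  row_full P -> k = n -> P *m pinvmx P = 1%:M /\ pinvmx P *m P = 1%:M.
Proof.
move=> P_full kn; split; last exact: mulVpmx.
by apply: mulmxVp; rewrite /row_free (eqP P_full) kn.
Qed.

End Bases.

Section MetricFromBasis.
Variables (R : realType) (n m d : nat) (F : 'M[R]_n).
Hypotheses (F_skew : F^T = - F) (mdn : (m + (m + d))%N = n).

Lemma exists_hyp_metric (U : 'M[R]_(m, n)) (W : 'M[R]_(m + d, n)) :
  row_full (col_mx U W) -> W *m F *m W^T = 0 ->
  \tr (lsubmx (U *m F *m W^T) *m lsubmx (U *m F *m W^T)) = 0 ->
  exists G : 'M[R]_n, [/\ scalar_product G, has_index G d, l2dot G F F = 0,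
    U *m G *m U^T = 0 & W *m G *m W^T = block_mx 0 0 0 1%:M].
Proof.
move=> P_full WFW trUFW; have [PB BP] := row_full_pinvmx P_full mdn.
set P := col_mx U W in P_full PB BP *; set B := pinvmx P in PB BP *.
have [UB WB] : U *m B = row_mx 1%:M 0 /\ W *m B = row_mx 0 1%:M.
  by apply/eq_col_mx; rewrite -mul_col_mx PB -block_mxEv -scalar_mx_block.
have PFP : P *m F *m P^T = block_mx (U *m F *m U^T) (U *m F *m W^T) (- (U *m F *m W^T)^T) 0.
  rewrite tr_col_mx mul_col_mx mul_col_row WFW !trmx_mul trmxK F_skew.
  by rewrite mulNmx mulmxN opprK mulmxA.
exists (B *m hyp_mx R m d *m B^T); split.
- exact (scalar_product_congr PB BP (scalar_product_hyp_mx R m d)).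
- exact (has_index_congr PB BP (hyp_mx_index R m d)).
- by rewrite (l2dot_congr PB BP) ?hyp_mx_unit // PFP l2dot_hyp_mx trUFW oppr0 mul0rn.
- by rewrite quad_congr UB hyp_mx_isotropic_l.
- by rewrite quad_congr WB hyp_mx_isotropic_r.
Qed.

Lemma exists_metric_isotropic_pair (U : 'M[R]_(m, n)) (W : 'M[R]_(m + d, n)) :
  (d != 0)%N || (m != 1)%N -> row_full (col_mx U W) -> W *m F *m W^T = 0 ->
  exists G : 'M[R]_n, [/\ scalar_product G, has_index G d, l2dot G F F = 0,
    U *m G *m U^T = 0 & (d = 0%N -> W *m G *m W^T = 0)].
Proof.
move=> md_neq1 P_full WFW.
have [A [B [A_unit B_unit trAB]]] := exists_equiv_trace_sqr0 (U *m F *m W^T) md_neq1.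
have AU_eq : (A *m U :=: U)%MS by apply/eqmxMfull; rewrite row_full_unit.
have BW_eq : (B^T *m W :=: W)%MS by apply/eqmxMfull; rewrite row_full_unit unitmx_tr.
have P'_full : row_full (col_mx (A *m U) (B^T *m W)).
  have -> : col_mx (A *m U) (B^T *m W) = block_mx A 0 0 B^T *m col_mx U W.
    by rewrite mul_block_col !mul0mx addr0 add0r.
  have D_full : row_full (block_mx A 0 0 B^T).
    by rewrite row_full_unit block_diag_mx_unit A_unit unitmx_tr.
  by rewrite /row_full (eqmxMfull _ D_full).
have [||G [G_sp G_index FF0 UGU WGW]] := exists_hyp_metric P'_full.
- by rewrite -quad_congr WFW mulmx0 mul0mx.
- by move: trAB; rewrite trmx_mul trmxK !mulmxA.
exists G; split=> //.
  by apply: quad_form_sub0 UGU; rewrite AU_eq.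
move=> d0; subst d; apply: (quad_form_sub0 (U := B^T *m W)); first by rewrite BW_eq.
by rewrite WGW [1%:M]flatmx0 block_mx0.
Qed.

End MetricFromBasis.

Section IsotropicMetric.
Variables (R : realType) (n : nat) (F : 'M[R]_n).
Hypotheses (n_neq2 : n != 2%N) (F_skew : F^T = - F).

Lemma exists_isotropic_metric :
  exists G : 'M[R]_n, [/\ scalar_product G, has_index G (n %% 2)%N & l2dot G F F = 0].
Proof.
have [W WFW rank_W] := exists_isotropic_half F_skew.
have mdn : (n %/ 2 + (n %/ 2 + n %% 2))%N = n by lia.
have [Wb Wb_free Wb_sub] : exists2 Wb : 'M[R]_(n %/ 2 + n %% 2, n),
    row_free Wb & (Wb <= W)%MS by apply: exists_row_free_sub; lia.
have [Ub P_full] : exists Ub : 'M[R]_(n %/ 2, n), row_full (col_mx Ub Wb).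
  by apply: exists_row_full_col_mx Wb_free _; lia.
have md_neq1 : (n %% 2 != 0)%N || (n %/ 2 != 1)%N by apply/orP; lia.
have [|G [G_sp G_index FF0 _ _]] := exists_metric_isotropic_pair F_skew mdn md_neq1 P_full.
  exact: quad_form_sub0 Wb_sub WFW.
by exists G.
Qed.

Lemma exists_isotropic_metric_pair (U W : 'M[R]_n) :
  row_full (U + W)%MS -> (U :&: W)%MS = 0 -> \rank U = \rank W ->
  W *m F *m W^T = 0 ->
  exists G : 'M[R]_n, [/\ scalar_product G, has_index G 0, l2dot G F F = 0,
    isotropic G U & isotropic G W].
Proof.
move=> UW_full UW_cap0 rank_UW WFW.
have rank_n : (\rank U + \rank U)%N = n.
  by move: UW_full; rewrite /row_full (mxrank_disjoint_sum UW_cap0) rank_UW => /eqP.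
have mdn : (\rank U + (\rank U + 0))%N = n by rewrite addn0.
have [Wb Wb_free Wb_sub] : exists2 Wb : 'M[R]_(\rank U + 0, n),
    row_free Wb & (Wb <= W)%MS by apply: exists_row_free_sub; lia.
have Wb_eq : (Wb == W)%MS.
  by rewrite -(mxrank_leqif_eq Wb_sub) (eqP Wb_free); lia.
have P_full : row_full (col_mx (row_base U) Wb).
  by rewrite /row_full -addsmxE (adds_eqmx (eq_row_base U) (eqmxP Wb_eq)).
have md_neq1 : (0 != 0)%N || (\rank U != 1)%N by apply/orP; lia.
have [|G [G_sp G_index FF0 UGU WGW]] := exists_metric_isotropic_pair F_skew mdn md_neq1 P_full.
  exact: quad_form_sub0 Wb_sub WFW.
exists G; split=> //.
  by apply: quad_form_sub0 UGU; rewrite eq_row_base.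
by apply: quad_form_sub0 (WGW erefl); rewrite (eqmxP Wb_eq).
Qed.

End IsotropicMetric.

Lemma in_wedge_isotropic (R : realType) n (U W F : 'M[R]_n) :
  in_wedge U W F -> W *m F *m W^T = 0.
Proof.
case=> k [a [b [Wa [_ ->]]]]; rewrite /wedge mulmx_sumr mulmx_suml big1 // => i _.
rewrite mulmxBr mulmxBl !mulmxA Wa !mul0mx -mulmxA -trmx_mul Wa trmx0 mulmx0.
exact: subr0.
Qed.

Theorem lemma1p1 (R : realType) (n : nat) (F : 'M[R]_n) :
  n != 2%N -> two_form F ->
  (exists G : 'M[R]_n,
      scalar_product G /\ (has_index G 0 \/ has_index G 1) /\ l2dot G F F = 0) /\
  (forall U W : 'M[R]_n,
      row_full (U + W)%MS -> (U :&: W)%MS = 0 -> \rank U = \rank W ->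
      in_wedge U W F ->
      exists G : 'M[R]_n,
        scalar_product G /\ (has_index G 0 \/ has_index G 1) /\
        l2dot G F F = 0 /\ isotropic G U /\ isotropic G W).
Proof.
move=> n_neq2 F_skew; split.
  have [G [G_sp G_index FF0]] := exists_isotropic_metric n_neq2 F_skew.
  exists G; split=> //; split=> //.
  have [n_mod2 | n_mod2] : (n %% 2 = 0 \/ n %% 2 = 1)%N by lia.
    by left; rewrite n_mod2 in G_index.
  by right; rewrite n_mod2 in G_index.
move=> U W UW_full UW_cap0 rank_UW /in_wedge_isotropic WFW.
have [G [G_sp G_index FF0 UGU WGW]] :=
  exists_isotropic_metric_pair n_neq2 F_skew UW_full UW_cap0 rank_UW WFW.
by exists G; split=> //; split; [left | do !split].
Qed.
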